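(* Let $T$ be a perfect binary tree with $n\ge2$ nodes and nonnegative node weights $(x_v)$, let $1\le k\le n$, $\epsilon>0$, and $\mathrm{OPT}=\min_{\Omega\in\mathbb{T}_k}\sum_{v\notin\Omega}x_v$. Let $W>0$ satisfy $\mathrm{OPT}\le W\le \log_2 n\cdot\mathrm{OPT}$. Define $\hat x_v=\lceil x_v n\log_2 n/(\epsilon W)\rceil$ if $x_v\le W$ and $\hat x_v=\lceil n\log_2 n/\epsilon\rceil+n$ if $x_v>W$. Let $\hat\Omega\in\mathbb{T}_k$ minimize $\sum_{v\notin\Omega}\hat x_v$ over $\Omega\in\mathbb{T}_k$. Then $\sum_{v\notin\hat\Omega}x_v\le(1+\epsilon)\mathrm{OPT}$.
   Context: $\mathbb{T}_k$ denotes the family of node sets $\Omega\subseteq T$ that contain the root, are closed under taking parents, and satisfy $|\Omega|\le k$. *)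

From Stdlib Require Import Reals ZArith Arith List.
Open Scope R_scope.

(* Nodes of a tree with n nodes are 0..n-1 in heap order:
   root is 0, children of i are 2i+1 and 2i+2, parent of i>=1 is (i-1)/2. *)
Definition parent (i : nat) : nat := ((i - 1) / 2)%nat.

Definition perfect_size (n : nat) : Prop := exists h : nat, n = (2 ^ (S h) - 1)%nat.

Definition in_Tk (n k : nat) (Om : nat -> bool) : Prop :=
  (forall i, Om i = true -> (i < n)%nat) /\
  Om 0%nat = true /\
  (forall i, Om i = true -> Om (parent i) = true) /\
  (length (filter Om (seq 0 n)) <= k)%nat.

Definition cost (n : nat) (w : nat -> R) (Om : nat -> bool) : R :=
  fold_right Rplus 0 (map (fun i => if Om i then 0 else w i) (seq 0 n)).

Definition Rceil (x : R) : Z := (1 - up (- x))%Z.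

Definition log2 (x : R) : R := ln x / ln 2.

Definition xhat (n : nat) (eps W : R) (x : nat -> R) (v : nat) : R :=
  if Rle_dec (x v) W
  then IZR (Rceil (x v * INR n * log2 (INR n) / (eps * W)))
  else IZR (Rceil (INR n * log2 (INR n) / eps)) + INR n.

From Stdlib Require Import Reals ZArith Arith List Lra Lia.
Open Scope R_scope.

(* Rescaling by [M = n log2 n / (eps W)] and rounding up changes the cost of any
   node set avoiding heavy nodes by less than one per node, so [M * cost] and
   the rounded cost differ by less than [n].  Heavy nodes are rounded to more
   than [M * W + n >= M * OPT + n], which exceeds the rounded cost of an optimal
   set (all of whose excluded nodes weigh at most [OPT <= W]); hence the
   rounded optimum keeps every heavy node and
   [M * cost Omhat < M * OPT + n <= M * (1 + eps) * OPT], the last step being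
   [W <= log2 n * OPT].  Nothing about the tree or the size bound [k] is used
   beyond the minimality of [Omhat]. *)

Definition sumR (l : list nat) (f : nat -> R) : R := fold_right Rplus 0 (map f l).

Lemma sumR_le l f g : (forall i, In i l -> f i <= g i) -> sumR l f <= sumR l g.
Proof.
  induction l as [|a l IH]; intros H; unfold sumR in *; simpl; [lra|].
  assert (f a <= g a) by (apply H; left; reflexivity).
  assert (fold_right Rplus 0 (map f l) <= fold_right Rplus 0 (map g l))
    by (apply IH; intros; apply H; right; assumption).
  lra.
Qed.

Lemma sumR_lt_add_length l f g :
  (forall i, In i l -> f i < g i + 1) -> l <> nil ->
  sumR l f < sumR l g + INR (length l).
Proof.
  induction l as [|a l IH]; intros H Hl; [congruence|].
  assert (f a < g a + 1) by (apply H; left; reflexivity).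
  change (length (a :: l)) with (S (length l)); rewrite S_INR.
  destruct l as [|b l]; [unfold sumR; simpl; lra|].
  assert (sumR (b :: l) f < sumR (b :: l) g + INR (length (b :: l)))
    by (apply IH; [intros; apply H; right; assumption | discriminate]).
  unfold sumR in *; cbn [fold_right map] in *; lra.
Qed.

Lemma sumR_scale l c f : sumR l (fun i => c * f i) = c * sumR l f.
Proof. induction l as [|a l IH]; unfold sumR in *; simpl; [|rewrite IH]; lra. Qed.

Lemma sumR_ge_term l f v :
  (forall i, In i l -> 0 <= f i) -> In v l -> f v <= sumR l f.
Proof.
  induction l as [|a l IH]; intros H Hv; [contradiction|].
  assert (0 <= sumR l f).
  { apply Rle_trans with (sumR l (fun _ => 0)).
    - clear; induction l; unfold sumR in *; simpl; lra.
    - apply sumR_le; intros; apply H; right; assumption. }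
  assert (0 <= f a) by (apply H; left; reflexivity).
  unfold sumR in *; simpl.
  destruct Hv as [<- | Hv]; [lra|].
  assert (f v <= fold_right Rplus 0 (map f l))
    by (apply IH; [intros; apply H; right|]; assumption).
  lra.
Qed.

Definition excluded (w : nat -> R) (Om : nat -> bool) (i : nat) : R :=
  if Om i then 0 else w i.

Lemma cost_sumR n w Om : cost n w Om = sumR (seq 0 n) (excluded w Om).
Proof. reflexivity. Qed.

Lemma cost_scale n c w Om : cost n (fun i => c * w i) Om = c * cost n w Om.
Proof.
  rewrite !cost_sumR, <- sumR_scale.
  apply Rle_antisym; apply sumR_le; intros i _; unfold excluded; destruct (Om i); lra.
Qed.

Lemma cost_le_compat n w1 w2 Om :
  (forall v, (v < n)%nat -> Om v = false -> w1 v <= w2 v) ->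
  cost n w1 Om <= cost n w2 Om.
Proof.
  intros H; rewrite !cost_sumR; apply sumR_le; intros i Hi.
  apply in_seq in Hi; unfold excluded.
  destruct (Om i) eqn:E; [lra | apply H; [lia | exact E]].
Qed.

Lemma cost_lt_add_n n w1 w2 Om : (0 < n)%nat ->
  (forall v, (v < n)%nat -> Om v = false -> w1 v < w2 v + 1) ->
  cost n w1 Om < cost n w2 Om + INR n.
Proof.
  intros Hn H; rewrite !cost_sumR.
  rewrite <- (length_seq n 0) at 3.
  apply sumR_lt_add_length.
  - intros i Hi; apply in_seq in Hi; unfold excluded.
    destruct (Om i) eqn:E; [lra | apply H; [lia | exact E]].
  - destruct n; [lia | discriminate].
Qed.

Lemma cost_ge_excluded n w Om v :
  (forall i, (i < n)%nat -> 0 <= w i) -> (v < n)%nat -> Om v = false ->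
  w v <= cost n w Om.
Proof.
  intros Hw Hv Hout; rewrite cost_sumR.
  replace (w v) with (excluded w Om v) by (unfold excluded; rewrite Hout; reflexivity).
  apply sumR_ge_term; [|apply in_seq; lia].
  intros i Hi; apply in_seq in Hi; unfold excluded.
  destruct (Om i); [lra | apply Hw; lia].
Qed.

Lemma Rceil_bounds y : y <= IZR (Rceil y) < y + 1.
Proof.
  unfold Rceil; rewrite minus_IZR.
  destruct (archimed (- y)); simpl; lra.
Qed.

Lemma log2_pos y : 1 < y -> 0 < log2 y.
Proof.
  intros Hy; unfold log2.
  apply Rdiv_lt_0_compat; rewrite <- ln_1; apply ln_increasing; lra.
Qed.

Section Rounding.

Variables (n : nat) (eps W : R) (x : nat -> R).
Hypotheses (hn : (2 <= n)%nat) (heps : 0 < eps) (hW : 0 < W)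
  (hx : forall v, (v < n)%nat -> 0 <= x v).

Definition scale : R := INR n * log2 (INR n) / (eps * W).

Lemma INR_n_ge_2 : 2 <= INR n.
Proof. change 2 with (INR 2); apply le_INR; exact hn. Qed.

Lemma scale_pos : 0 < scale.
Proof.
  pose proof INR_n_ge_2; pose proof (log2_pos (INR n) ltac:(lra)).
  unfold scale; apply Rdiv_lt_0_compat; apply Rmult_lt_0_compat; lra.
Qed.

Lemma xhat_light v : x v <= W ->
  x v * scale <= xhat n eps W x v < x v * scale + 1.
Proof.
  intros Hv; unfold xhat; destruct (Rle_dec (x v) W); [|contradiction].
  replace (x v * scale) with (x v * INR n * log2 (INR n) / (eps * W))
    by (unfold scale; field; lra).
  apply Rceil_bounds.
Qed.

Lemma xhat_heavy v : ~ x v <= W -> W * scale + INR n <= xhat n eps W x v.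
Proof.
  intros Hv; unfold xhat; destruct (Rle_dec (x v) W); [contradiction|].
  replace (W * scale) with (INR n * log2 (INR n) / eps) by (unfold scale; field; lra).
  pose proof (Rceil_bounds (INR n * log2 (INR n) / eps)); lra.
Qed.

Lemma xhat_nonneg v : (v < n)%nat -> 0 <= xhat n eps W x v.
Proof.
  intros Hv; pose proof scale_pos; pose proof INR_n_ge_2.
  destruct (Rle_dec (x v) W) as [Hl | Hh].
  - pose proof (xhat_light v Hl); pose proof (hx v Hv); nra.
  - pose proof (xhat_heavy v Hh); nra.
Qed.

Lemma excluded_light Om : cost n x Om <= W ->
  forall v, (v < n)%nat -> Om v = false -> x v <= W.
Proof.
  intros Hc v Hv Hout; pose proof (cost_ge_excluded n x Om v hx Hv Hout); lra.
Qed.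

Lemma cost_xhat_lt Om : cost n x Om <= W ->
  cost n (xhat n eps W x) Om < scale * cost n x Om + INR n.
Proof.
  intros Hc; rewrite <- cost_scale.
  apply cost_lt_add_n; [lia|].
  intros v Hv Hout; pose proof (xhat_light v (excluded_light Om Hc v Hv Hout)); lra.
Qed.

Lemma heavy_kept Om Om' : cost n x Om <= W ->
  cost n (xhat n eps W x) Om' <= cost n (xhat n eps W x) Om ->
  forall v, (v < n)%nat -> ~ x v <= W -> Om' v = true.
Proof.
  intros Hc Hmin v Hv Hh; destruct (Om' v) eqn:Hout; [reflexivity|].
  pose proof (cost_ge_excluded n _ Om' v xhat_nonneg Hv Hout).
  pose proof (xhat_heavy v Hh); pose proof (cost_xhat_lt Om Hc).
  pose proof scale_pos; nra.
Qed.

Lemma scaled_cost_lt Om Om' : cost n x Om <= W ->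
  cost n (xhat n eps W x) Om' <= cost n (xhat n eps W x) Om ->
  scale * cost n x Om' < scale * cost n x Om + INR n.
Proof.
  intros Hc Hmin.
  assert (scale * cost n x Om' <= cost n (xhat n eps W x) Om').
  { rewrite <- cost_scale; apply cost_le_compat; intros v Hv Hout.
    destruct (Rle_dec (x v) W) as [Hl | Hh].
    - pose proof (xhat_light v Hl); lra.
    - rewrite (heavy_kept Om Om' Hc Hmin v Hv Hh) in Hout; discriminate. }
  pose proof (cost_xhat_lt Om Hc); lra.
Qed.

Lemma n_le_scale_eps OPT : W <= log2 (INR n) * OPT -> INR n <= scale * (eps * OPT).
Proof.
  intros HW; pose proof INR_n_ge_2.
  replace (scale * (eps * OPT)) with (INR n * (log2 (INR n) * OPT) / W)
    by (unfold scale; field; lra).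
  apply Rmult_le_reg_r with W; [lra|].
  replace (INR n * (log2 (INR n) * OPT) / W * W) with (INR n * (log2 (INR n) * OPT))
    by (field; lra).
  nra.
Qed.

End Rounding.

Theorem lemma13 (n k : nat) (x : nat -> R) (eps W OPT : R) (Omhat : nat -> bool)
  (hperf : perfect_size n) (hn : (2 <= n)%nat)
  (hx : forall v, (v < n)%nat -> 0 <= x v)
  (hk1 : (1 <= k)%nat) (hkn : (k <= n)%nat) (heps : 0 < eps)
  (hOPT_att : exists Om, in_Tk n k Om /\ cost n x Om = OPT)
  (hOPT_min : forall Om, in_Tk n k Om -> OPT <= cost n x Om)
  (hW : 0 < W) (hW1 : OPT <= W) (hW2 : W <= log2 (INR n) * OPT)
  (hOmhat : in_Tk n k Omhat)
  (hOmhat_min : forall Om, in_Tk n k Om ->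
      cost n (xhat n eps W x) Omhat <= cost n (xhat n eps W x) Om) :
  cost n x Omhat <= (1 + eps) * OPT.
Proof.
  destruct hOPT_att as [Om [HOm HcOm]].
  assert (Hlt : scale n eps W * cost n x Omhat < scale n eps W * OPT + INR n).
  { rewrite <- HcOm.
    apply scaled_cost_lt; [assumption .. | lra | apply hOmhat_min; assumption]. }
  pose proof (n_le_scale_eps n eps W hn heps hW OPT hW2).
  pose proof (scale_pos n eps W hn heps hW).
  nra.
Qed.
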